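(* Let $r\in\mathbb{N}_0$, $m\in\mathbb{N}$ with $k:=m-r\ge 2$, and let $x_0\le x_1\le\dots\le x_m$ be real numbers with $x_j<x_{j+r+1}$ for all $0\le j\le m-r-1$; put $d:=2(x_m-x_0)$. If $\varphi,\omega\in\Phi$ satisfy \[ \varphi(t)\le t^{k-1}\int_t^{d}u^{-k}\omega(u)\,du,\quad t\in(0,d/2],\qquad\text{and}\qquad \varphi(t)\le\omega(t),\quad t\in[d/2,d], \] then \[ \Lambda_r(x_0,\dots,x_{m-1};\varphi)\le c\,(x_m-x_0)\Lambda_r(x_0,\dots,x_m;\omega) \quad\text{and}\quad \Lambda_r(x_1,\dots,x_{m};\varphi)\le c\,(x_m-x_0)\Lambda_r(x_0,\dots,x_m;\omega), \] where the constants $c$ depend only on $k$.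
   Context: $\Phi$ denotes the set of nondecreasing functions $\varphi\in C[0,\infty]$ with $\varphi(0)=0$. For an ordered tuple $y_0\le\dots\le y_n$ (here applied with $n=m$ and $n=m-1$, each tuple with its own endpoints): $\mathcal{Q}_{n,r}:=\{(p,q):0\le p,q\le n,\ q-p\ge r+1\}$, $y_{-1}:=y_0-(y_n-y_0)$, $y_{n+1}:=y_n+(y_n-y_0)$, $d(p,q):=\min\{y_{q+1}-y_p,y_q-y_{p-1}\}$, and for $\varphi\in\Phi$, $\Lambda_{p,q,r}(y_0,\dots,y_n;\varphi):=\frac{\int_{y_q-y_p}^{d(p,q)}u^{p+r-q-1}\varphi(u)du}{\prod_{i=0}^{p-1}(y_q-y_i)\prod_{i=q+1}^{n}(y_i-y_p)}$ (empty products $=1$), $\Lambda_r(y_0,\dots,y_n;\varphi):=\max_{(p,q)\in\mathcal{Q}_{n,r}}\Lambda_{p,q,r}(y_0,\dots,y_n;\varphi)$. *)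

From Stdlib Require Import Reals Lra Lia List.
From Coquelicot Require Import Coquelicot.
Import ListNotations.
Open Scope R_scope.

Definition inPhi (phi : R -> R) : Prop :=
  (forall s t, 0 <= s -> s <= t -> phi s <= phi t) /\
  (forall t, 0 <= t ->
     filterlim phi (within (fun u => 0 <= u) (locally t)) (locally (phi t))) /\
  phi 0 = 0.

(* A tuple y_0 <= ... <= y_n is given by y : nat -> R together with n. *)

(* y_{p-1} with the convention y_{-1} := y_0 - (y_n - y_0) *)
Definition y_prev (y : nat -> R) (n p : nat) : R :=
  match p with
  | O => y 0%nat - (y n - y 0%nat)
  | S p' => y p'
  end.

(* y_{q+1} with the convention y_{n+1} := y_n + (y_n - y_0) *)
Definition y_next (y : nat -> R) (n q : nat) : R :=
  if Nat.eqb q n then y n + (y n - y 0%nat) else y (S q).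

Definition dpq (y : nat -> R) (n p q : nat) : R :=
  Rmin (y_next y n q - y p) (y q - y_prev y n p).

Definition Qset (n r : nat) : list (nat * nat) :=
  filter (fun pq => Nat.leb (fst pq + r + 1) (snd pq))
    (flat_map (fun p => map (fun q => (p, q)) (seq 0 (S n))) (seq 0 (S n))).

Definition Lambda_pqr (y : nat -> R) (n p q r : nat) (phi : R -> R) : R :=
  RInt (fun u => powerRZ u (Z.of_nat p + Z.of_nat r - Z.of_nat q - 1)%Z * phi u)
       (y q - y p) (dpq y n p q)
  / (fold_right Rmult 1 (map (fun i => y q - y i) (seq 0 p)) *
     fold_right Rmult 1 (map (fun i => y i - y p) (seq (S q) (n - q)))).

(* Maximum over Q_{n,r} (which is nonempty whenever n >= r + 1, the only
   case used below; all Lambda_pqr are then >= 0). *)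
Definition Lambda_r (y : nat -> R) (n r : nat) (phi : R -> R) : R :=
  fold_right Rmax 0 (map (fun pq => Lambda_pqr y n (fst pq) (snd pq) r phi) (Qset n r)).

(* Let d := 2 (x_m - x_0), F(t) := int_t^d u^(-k) omega(u) du, and D(p,q) the denominator of
   Lambda_(p,q,r).  Every pair (p,q) of the full tuple bounds the omega-integral over
   [x_q - x_p, d(p,q)] by D(p,q) Lambda_r(x_0..x_m; omega).  Since d(p,q) is itself the length of a
   neighbouring pair with one index fewer outside [p,q], induction on p + (m - q) gives
   t^(p + m - q) F(t) <= K t D(p,q) Lambda_r(x_0..x_m; omega) on [x_q - x_p, d(p,q)].
   For a pair of x_0..x_(m-1), split its phi-integral at L = x_m - x_0: above L use phi <= omega and
   the pair (0,m); below L, phi(u) <= u^(k-1) F(u) and an integration by parts leave an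
   omega-integral and a boundary term b^e F(b), both controlled by the pair (p,q) or (p,m) of the
   full tuple.  The tuple x_1..x_m reduces to x_0..x_(m-1) through the reflection
   x_i |-> -x_(m-i), which preserves Lambda_r. *)

From Stdlib Require Import Reals Lra Lia List.
From Coquelicot Require Import Coquelicot.
Open Scope R_scope.

Lemma inPhi_ge0 f t : inPhi f -> 0 <= t -> 0 <= f t.
Proof. intros [Hmono [_ H0]] Ht. rewrite <- H0. apply Hmono; lra. Qed.

Lemma locally_gt a z : a < z -> locally z (fun u => a < u).
Proof.
  intros Haz. exists (mkposreal (z - a) ltac:(lra)). intros u Hu.
  unfold ball in Hu; simpl in Hu. unfold AbsRing_ball, abs, minus, plus, opp in Hu; simpl in Hu.
  apply Rabs_lt_between in Hu. lra.
Qed.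

Lemma inPhi_continuous f z : inPhi f -> 0 < z -> continuous f z.
Proof.
  intros [_ [Hc _]] Hz P HP.
  specialize (Hc z (Rlt_le _ _ Hz) P HP). unfold filtermap, within in Hc |- *.
  generalize (filter_and _ _ Hc (locally_gt 0 z Hz)).
  apply filter_imp. intros u [Hu Hu0]. apply Hu. lra.
Qed.

Definition wint (n : nat) (f : R -> R) (a b : R) : R := RInt (fun v => / v ^ n * f v) a b.

Section WeightedIntegral.

Variable f : R -> R.
Hypothesis Hf : inPhi f.

Lemma continuous_weighted n z : 0 < z -> continuous (fun v => / v ^ n * f v) z.
Proof.
  intros Hz. apply (continuous_mult (fun v => / v ^ n) f).
  - apply (ex_derive_continuous (K := R_AbsRing) (V := R_NormedModule)).
    auto_derive. apply pow_nonzero. lra.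
  - now apply inPhi_continuous.
Qed.

Lemma ex_wint n a b : 0 < a -> 0 < b -> ex_RInt (fun v => / v ^ n * f v) a b.
Proof.
  intros Ha Hb. apply (ex_RInt_continuous (V := R_CompleteNormedModule)).
  intros z [Hz _]. apply continuous_weighted.
  assert (0 < Rmin a b) by now apply Rmin_glb_lt. lra.
Qed.

Lemma wint_ge0 n a b : 0 < a -> a <= b -> 0 <= wint n f a b.
Proof.
  intros Ha Hab. apply RInt_ge_0; auto.
  - apply ex_wint; lra.
  - intros v Hv. apply Rmult_le_pos.
    + left. apply Rinv_0_lt_compat, pow_lt. lra.
    + apply inPhi_ge0; auto; lra.
Qed.

Lemma wint_Chasles n a b c : 0 < a -> 0 < b -> 0 < c ->
  wint n f a b + wint n f b c = wint n f a c.
Proof.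
  intros Ha Hb Hc. apply (RInt_Chasles (V := R_CompleteNormedModule)); apply ex_wint; auto.
Qed.

Lemma wint_le_sub n a b c d : 0 < a -> a <= c -> c <= d -> d <= b ->
  wint n f c d <= wint n f a b.
Proof.
  intros Ha Hac Hcd Hdb.
  rewrite <- (wint_Chasles n a c b), <- (wint_Chasles n c d b) by lra.
  assert (0 <= wint n f a c) by (apply wint_ge0; lra).
  assert (0 <= wint n f d b) by (apply wint_ge0; lra).
  lra.
Qed.

Lemma wint_le_weight n n' a b C : 0 < a -> a <= b ->
  (forall v, a < v < b -> / v ^ n <= C * / v ^ n') ->
  wint n f a b <= C * wint n' f a b.
Proof.
  intros Ha Hab Hw. unfold wint.
  rewrite <- (RInt_scal (V := R_CompleteNormedModule)) by (apply ex_wint; lra).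
  apply RInt_le; auto.
  - apply ex_wint; lra.
  - apply (ex_RInt_scal (V := R_NormedModule)). apply ex_wint; lra.
  - intros v Hv. unfold scal; simpl; unfold mult; simpl. rewrite <- Rmult_assoc.
    apply Rmult_le_compat_r; [apply inPhi_ge0; auto; lra | auto].
Qed.

End WeightedIntegral.

Lemma wint_le_fun n f g a b : inPhi f -> inPhi g -> 0 < a -> a <= b ->
  (forall v, a < v < b -> f v <= g v) -> wint n f a b <= wint n g a b.
Proof.
  intros Hf Hg Ha Hab Hfg. apply RInt_le; auto; try (apply ex_wint; auto; lra).
  intros v Hv. apply Rmult_le_compat_l; auto.
  left. apply Rinv_0_lt_compat, pow_lt. lra.
Qed.

Section Tail.

Variables (k : nat) (om : R -> R) (T : R).
Hypotheses (Hom : inPhi om) (HT : 0 < T).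

Lemma is_derive_wint_lower u : 0 < u ->
  is_derive (fun t => wint k om t T) u (- (/ u ^ k * om u)).
Proof.
  intros Hu.
  apply (is_derive_RInt' (V := R_NormedModule) (fun v => / v ^ k * om v) (fun t => wint k om t T) u T).
  - apply (filter_imp (fun y => 0 < y)); [| now apply locally_gt].
    intros y Hy. apply (RInt_correct (V := R_CompleteNormedModule)). now apply ex_wint.
  - apply continuous_weighted; auto.
Qed.

Lemma continuous_wint_lower u : 0 < u -> continuous (fun t => wint k om t T) u.
Proof.
  intros Hu. apply (ex_derive_continuous (K := R_AbsRing) (V := R_NormedModule)).
  eexists. now apply is_derive_wint_lower.
Qed.

Lemma continuous_pow_wint_lower j u : 0 < u -> continuous (fun t => t ^ j * wint k om t T) u.
Proof.
  intros Hu. apply (continuous_mult (fun t => t ^ j) (fun t => wint k om t T)).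
  - apply (ex_derive_continuous (K := R_AbsRing) (V := R_NormedModule)). auto_derive. exact I.
  - now apply continuous_wint_lower.
Qed.

Lemma ex_RInt_pow_wint_lower j a c : 0 < a -> a <= c ->
  ex_RInt (fun u => u ^ j * wint k om u T) a c.
Proof.
  intros Ha Hac. apply (ex_RInt_continuous (V := R_CompleteNormedModule)). intros z Hz.
  rewrite Rmin_left in Hz by lra. apply continuous_pow_wint_lower. lra.
Qed.

(* d/du (u^e F(u)) = e u^(e-1) F(u) - u^(-n) om(u) for F(u) := wint k om u T, since k = n + e. *)
Lemma wint_lower_by_parts n e a c : k = (n + e)%nat -> (1 <= e)%nat -> 0 < a -> a <= c ->
  INR e * RInt (fun u => u ^ (e - 1) * wint k om u T) a c =
  c ^ e * wint k om c T - a ^ e * wint k om a T + wint n om a c.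
Proof.
  intros Hk He Ha Hac.
  set (F := fun t => wint k om t T).
  set (h := fun u => u ^ (e - 1) * F u).
  assert (Hexh : ex_RInt h a c) by now apply ex_RInt_pow_wint_lower.
  assert (HI : is_RInt (fun u => INR e * h u - / u ^ n * om u) a c (c ^ e * F c - a ^ e * F a)).
  { apply (is_RInt_derive (V := R_CompleteNormedModule) (fun u => u ^ e * F u)).
    - intros u Hu. rewrite Rmin_left in Hu by lra.
      apply is_derive_Reals.
      replace (INR e * h u - / u ^ n * om u)
        with (INR e * u ^ Init.Nat.pred e * F u + u ^ e * (- (/ u ^ k * om u))).
      + apply derivable_pt_lim_mult; [apply derivable_pt_lim_pow |].
        apply is_derive_Reals, is_derive_wint_lower. lra.
      + unfold h. replace (Init.Nat.pred e) with (e - 1)%nat by lia.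
        rewrite Hk, pow_add.
        assert (u ^ e <> 0) by (apply pow_nonzero; lra).
        assert (u ^ n <> 0) by (apply pow_nonzero; lra).
        field. auto.
    - intros u Hu. rewrite Rmin_left in Hu by lra.
      apply (continuous_minus (fun u => INR e * h u) (fun u => / u ^ n * om u)).
      + apply (continuous_scal_r (INR e) h). apply continuous_pow_wint_lower. lra.
      + apply continuous_weighted; auto. lra. }
  apply (is_RInt_unique (V := R_CompleteNormedModule)) in HI.
  rewrite (RInt_minus (V := R_CompleteNormedModule)) in HI.
  - rewrite (RInt_scal (V := R_CompleteNormedModule) h) in HI by exact Hexh.
    unfold minus, plus, opp, scal in HI; simpl in HI; unfold mult in HI; simpl in HI.
    unfold h, F in *. unfold wint in *. lra.
  - apply (ex_RInt_scal (V := R_NormedModule) h). exact Hexh.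
  - apply ex_wint; auto; lra.
Qed.

End Tail.

Section PhiBounds.

Variables (phi om : R -> R) (k : nat) (L : R).
Hypotheses (Hphi : inPhi phi) (Hom : inPhi om) (HL : 0 < L).
Hypothesis phi_small : forall t, 0 < t <= L -> phi t <= t ^ (k - 1) * wint k om t (2 * L).
Hypothesis phi_large : forall t, L <= t <= 2 * L -> phi t <= om t.

Lemma wint_phi_high s e c b D : k = (s + 1 + e)%nat -> L <= c <= b -> b <= 2 * L ->
  L ^ e <= D -> wint (s + 1) phi c b <= 2 ^ (e + 1) * L * D * wint (k + 1) om L (2 * L).
Proof.
  intros Hk Hcb Hb HD.
  assert (H2 : 0 < 2 ^ (e + 1)) by (apply pow_lt; lra).
  assert (HLD : 0 <= L * D).
  { apply Rmult_le_pos; [lra |]. apply Rle_trans with (L ^ e); [apply pow_le; lra | exact HD]. }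
  apply Rle_trans with (wint (s + 1) om c b).
  { apply wint_le_fun; auto; try lra. intros v Hv. apply phi_large. lra. }
  apply Rle_trans with (2 ^ (e + 1) * L * D * wint (k + 1) om c b).
  - apply wint_le_weight; auto; try lra. intros v Hv.
    replace (/ v ^ (s + 1)) with (v ^ (e + 1) * / v ^ (k + 1)).
    2: { replace (k + 1)%nat with (s + 1 + (e + 1))%nat by lia. rewrite (pow_add v (s + 1) (e + 1)).
         field. split; apply pow_nonzero; lra. }
    apply Rmult_le_compat_r; [left; apply Rinv_0_lt_compat, pow_lt; lra |].
    apply Rle_trans with ((2 * L) ^ (e + 1)); [apply pow_incr; lra |].
    rewrite Rpow_mult_distr, (pow_add L e 1), pow_1.
    replace (2 ^ (e + 1) * (L ^ e * L)) with (2 ^ (e + 1) * L * L ^ e) by ring.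
    apply Rmult_le_compat_l; [nra | exact HD].
  - apply Rmult_le_compat_l; [nra |]. apply wint_le_sub; auto; lra.
Qed.

Lemma wint_phi_low s e a c : k = (s + 1 + e)%nat -> (1 <= e)%nat -> 0 < a <= c -> c <= L ->
  wint (s + 1) phi a c <= wint (s + 1) om a c + c ^ e * wint k om c (2 * L).
Proof.
  intros Hk He Hac HcL.
  assert (HI := wint_lower_by_parts k om (2 * L) Hom ltac:(lra) (s + 1) e a c
                  ltac:(lia) He ltac:(lra) ltac:(lra)).
  set (J := RInt (fun u => u ^ (e - 1) * wint k om u (2 * L)) a c) in HI.
  assert (HJ : wint (s + 1) phi a c <= J).
  { apply RInt_le; try lra.
    - apply ex_wint; auto; lra.
    - apply ex_RInt_pow_wint_lower; auto; lra.
    - intros u Hu.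
      apply Rle_trans with (/ u ^ (s + 1) * (u ^ (k - 1) * wint k om u (2 * L))).
      + apply Rmult_le_compat_l; [left; apply Rinv_0_lt_compat, pow_lt; lra |].
        apply phi_small. lra.
      + right. replace (k - 1)%nat with (s + 1 + (e - 1))%nat by lia.
        rewrite (pow_add u (s + 1) (e - 1)). field. apply pow_nonzero. lra. }
  assert (HJ0 : 0 <= J).
  { apply RInt_ge_0; try lra.
    - apply ex_RInt_pow_wint_lower; auto; lra.
    - intros u Hu. apply Rmult_le_pos; [apply pow_le; lra | apply wint_ge0; auto; lra]. }
  assert (Ha0 : 0 <= a ^ e * wint k om a (2 * L)).
  { apply Rmult_le_pos; [apply pow_le; lra | apply wint_ge0; auto; lra]. }
  assert (He1 : 1 <= INR e) by (apply (le_INR 1); lia).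
  nra.
Qed.

Lemma wint_phi_low0 a c : (1 <= k)%nat -> 0 < a <= c -> c <= 2 * a -> c <= L ->
  wint k phi a c <= wint k om a (2 * L).
Proof.
  intros Hk Hac Hc2a HcL.
  set (Fa := wint k om a (2 * L)).
  assert (HFa : 0 <= Fa) by (apply wint_ge0; auto; lra).
  apply Rle_trans with (RInt (fun _ => / a * Fa) a c).
  - apply RInt_le; try lra.
    + apply ex_wint; auto; lra.
    + apply (ex_RInt_const (V := R_CompleteNormedModule)).
    + intros u Hu.
      assert (HFu : wint k om u (2 * L) <= Fa) by (apply wint_le_sub; auto; lra).
      assert (HFu0 : 0 <= wint k om u (2 * L)) by (apply wint_ge0; auto; lra).
      apply Rle_trans with (/ u ^ k * (u ^ (k - 1) * wint k om u (2 * L))).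
      * apply Rmult_le_compat_l; [left; apply Rinv_0_lt_compat, pow_lt; lra |].
        apply phi_small. lra.
      * replace (/ u ^ k * (u ^ (k - 1) * wint k om u (2 * L))) with (/ u * wint k om u (2 * L)).
        2: { assert (Hpk : u ^ k = u * u ^ (k - 1)) by (replace k with (S (k - 1)) at 1 by lia; reflexivity).
             rewrite Hpk. field. split; [apply pow_nonzero |]; lra. }
        apply Rmult_le_compat; auto.
        -- left. apply Rinv_0_lt_compat. lra.
        -- apply Rinv_le_contravar; lra.
  - rewrite (RInt_const (V := R_CompleteNormedModule)).
    unfold scal; simpl; unfold mult; simpl.
    replace ((c - a) * (/ a * Fa)) with ((c - a) / a * Fa) by (field; lra).
    assert ((c - a) / a <= 1) by (apply (proj1 (Rdiv_le_1 (c - a) a ltac:(lra))); lra).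
    assert (0 <= (c - a) / a) by (apply Rdiv_le_0_compat; lra).
    nra.
Qed.

Lemma wint_phi_le s e a b D W B : k = (s + 1 + e)%nat -> 0 < a <= b -> b <= 2 * L ->
  b ^ e <= D -> wint (k + 1) om L (2 * L) <= W -> 0 <= B ->
  (a < L -> wint (s + 1) phi a (Rmin b L) <= B) ->
  wint (s + 1) phi a b <= 2 ^ (e + 1) * L * D * W + B.
Proof.
  intros Hk Hab Hb HD HW HB Hlow.
  assert (HW0 : 0 <= W) by (apply Rle_trans with (wint (k + 1) om L (2 * L)); [apply wint_ge0; auto; lra | exact HW]).
  assert (HD0 : 0 < D) by (apply Rlt_le_trans with (b ^ e); [apply pow_lt; lra | exact HD]).
  assert (Hcoef : 0 <= 2 ^ (e + 1) * L * D).
  { repeat apply Rmult_le_pos; try lra. apply pow_le. lra. }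
  assert (Hhigh : forall c, L <= c <= b -> wint (s + 1) phi c b <= 2 ^ (e + 1) * L * D * W).
  { intros c Hc. eapply Rle_trans.
    - apply (wint_phi_high s e c b D); auto.
      apply Rle_trans with (b ^ e); [apply pow_incr; lra | exact HD].
    - apply Rmult_le_compat_l; auto. }
  destruct (Rlt_le_dec a L) as [HaL | HLa].
  - specialize (Hlow HaL). destruct (Rle_dec b L) as [HbL | HLb].
    + rewrite Rmin_left in Hlow by lra. nra.
    + rewrite Rmin_right in Hlow by lra.
      rewrite <- (wint_Chasles phi Hphi (s + 1) a L b) by lra.
      specialize (Hhigh L ltac:(lra)). lra.
  - specialize (Hhigh a ltac:(lra)). lra.
Qed.

End PhiBounds.

Definition prodl (l : list R) : R := fold_right Rmult 1 l.

Lemma prodl_app l1 l2 : prodl (l1 ++ l2) = prodl l1 * prodl l2.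
Proof. unfold prodl. induction l1 as [|a l1 IH]; simpl; [ring | rewrite IH; ring]. Qed.

Lemma prodl_ge0 (f : nat -> R) l : (forall i, In i l -> 0 <= f i) -> 0 <= prodl (map f l).
Proof.
  induction l as [|a l IH]; simpl; intros H; [lra |].
  apply Rmult_le_pos; auto.
Qed.

Lemma pow_le_prodl (f : nat -> R) l b : 0 <= b -> (forall i, In i l -> b <= f i) ->
  b ^ length l <= prodl (map f l).
Proof.
  intros Hb. induction l as [|a l IH]; simpl; intros H; [lra |].
  apply Rmult_le_compat; auto. apply pow_le. exact Hb.
Qed.

Lemma prodl_le_pow2 (f g : nat -> R) l : (forall i, In i l -> 0 <= f i <= 2 * g i) ->
  prodl (map f l) <= 2 ^ length l * prodl (map g l).
Proof.
  induction l as [|a l IH]; simpl; intros H; [lra |].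
  assert (Ha := H a (or_introl eq_refl)).
  assert (IHl : prodl (map f l) <= 2 ^ length l * prodl (map g l)) by auto.
  assert (0 <= prodl (map f l)) by (apply prodl_ge0; intros; apply H; auto).
  replace (2 * 2 ^ length l * (g a * prodl (map g l)))
    with (2 * g a * (2 ^ length l * prodl (map g l))) by ring.
  apply Rmult_le_compat; lra.
Qed.

Lemma prodl_map_seq_rev (f : nat -> R) a c :
  prodl (map f (seq (S a) c)) = prodl (map (fun i => f (a + c - i)%nat) (seq 0 c)).
Proof.
  revert a. induction c as [|c IH]; intros a; [reflexivity |].
  change (seq (S a) (S c)) with (S a :: seq (S (S a)) c).
  rewrite (seq_S c 0), map_app, prodl_app.
  rewrite (map_ext (fun i => f (a + S c - i)%nat) (fun i => f (S a + c - i)%nat))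
    by (intros i; f_equal; lia).
  rewrite <- IH. unfold prodl. simpl.
  replace (a + S c - c)%nat with (S a) by lia. ring.
Qed.

Lemma In_Qset n r p q : In (p, q) (Qset n r) <-> (p <= n /\ q <= n /\ p + r + 1 <= q)%nat.
Proof.
  unfold Qset. rewrite filter_In, in_flat_map. split.
  - intros [[p' [Hp Hq]] Hl]. apply in_map_iff in Hq as [q' [E Hq]]. inversion E; subst.
    apply in_seq in Hp. apply in_seq in Hq. apply Nat.leb_le in Hl. simpl in Hl. lia.
  - intros (Hp & Hq & Hpq). split; [| apply Nat.leb_le; simpl; lia].
    exists p. split; [apply in_seq; lia |].
    apply in_map_iff. exists q. split; [reflexivity | apply in_seq; lia].
Qed.

Lemma Lambda_r_ge0 y n r f : 0 <= Lambda_r y n r f.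
Proof.
  unfold Lambda_r. induction (map _ _) as [|a l IH]; simpl; [lra |].
  eapply Rle_trans; [exact IH | apply Rmax_r].
Qed.

Lemma Lambda_pqr_le_Lambda_r y n r f p q : (p <= n /\ q <= n /\ p + r + 1 <= q)%nat ->
  Lambda_pqr y n p q r f <= Lambda_r y n r f.
Proof.
  intros H. apply In_Qset in H. unfold Lambda_r.
  apply (in_map (fun pq => Lambda_pqr y n (fst pq) (snd pq) r f)) in H. simpl in H.
  induction (map _ _) as [|a l IH]; simpl in *; [contradiction |].
  destruct H as [<- | H]; [apply Rmax_l | eapply Rle_trans; [apply IH, H | apply Rmax_r]].
Qed.

Lemma Lambda_r_le y n r f B : 0 <= B ->
  (forall p q, (p <= n /\ q <= n /\ p + r + 1 <= q)%nat -> Lambda_pqr y n p q r f <= B) ->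
  Lambda_r y n r f <= B.
Proof.
  intros HB H. unfold Lambda_r.
  assert (Hl : forall a, In a (map (fun pq => Lambda_pqr y n (fst pq) (snd pq) r f) (Qset n r)) -> a <= B).
  { intros a Ha. apply in_map_iff in Ha as [[p q] [<- Hin]]. apply H, In_Qset, Hin. }
  induction (map _ _) as [|a l IH]; simpl in *; [exact HB |].
  apply Rmax_lub; auto.
Qed.

Definition denom (y : nat -> R) (n p q : nat) : R :=
  prodl (map (fun i => y q - y i) (seq 0 p)) * prodl (map (fun i => y i - y p) (seq (S q) (n - q))).

Lemma Lambda_pqr_wint y n p q r f : (p + r + 1 <= q)%nat -> 0 < y q - y p <= dpq y n p q ->
  Lambda_pqr y n p q r f = wint (q - p - r + 1) f (y q - y p) (dpq y n p q) / denom y n p q.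
Proof.
  intros Hpq Hd. unfold Lambda_pqr, denom, prodl, wint. f_equal. apply RInt_ext.
  intros u Hu. rewrite Rmin_left, Rmax_right in Hu by lra.
  replace (Z.of_nat p + Z.of_nat r - Z.of_nat q - 1)%Z with (- Z.of_nat (q - p - r + 1))%Z by lia.
  rewrite powerRZ_neg', <- pow_powerRZ. reflexivity.
Qed.

Section Reflection.

Variables (y y' : nat -> R) (n : nat).
Hypothesis Hrefl : forall i, (i <= n)%nat -> y' i = - y (n - i).

Lemma y_next_reflect p q : (p <= q <= n)%nat ->
  y_next y' n q - y' p = y (n - p) - y_prev y n (n - q).
Proof.
  intros Hpq. unfold y_next. destruct (Nat.eqb_spec q n) as [-> | Hq].
  - rewrite Nat.sub_diag. simpl y_prev. rewrite !Hrefl by lia. rewrite Nat.sub_diag, Nat.sub_0_r. ring.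
  - replace (n - q)%nat with (S (n - S q)) by lia. simpl y_prev. rewrite !Hrefl by lia. ring.
Qed.

Lemma y_prev_reflect p q : (p <= q <= n)%nat ->
  y' q - y_prev y' n p = y_next y n (n - p) - y (n - q).
Proof.
  intros Hpq. unfold y_next. destruct p as [| p]; simpl y_prev.
  - rewrite Nat.sub_0_r, Nat.eqb_refl, !Hrefl by lia. rewrite Nat.sub_diag, Nat.sub_0_r. ring.
  - destruct (Nat.eqb_spec (n - S p) n) as [E | _]; [lia |].
    rewrite !Hrefl by lia. replace (S (n - S p)) with (n - p)%nat by lia. ring.
Qed.

Lemma Lambda_pqr_reflect r f p q : (p <= q <= n)%nat ->
  Lambda_pqr y' n p q r f = Lambda_pqr y n (n - q) (n - p) r f.
Proof.
  intros Hpq.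
  assert (Hleft : prodl (map (fun i => y' q - y' i) (seq 0 p))
                  = prodl (map (fun i => y i - y (n - q)) (seq (S (n - p)) p))).
  { rewrite prodl_map_seq_rev. f_equal. apply map_ext_in. intros i Hi. apply in_seq in Hi.
    rewrite !Hrefl by lia. replace (n - p + p - i)%nat with (n - i)%nat by lia. ring. }
  assert (Hright : prodl (map (fun i => y' i - y' p) (seq (S q) (n - q)))
                   = prodl (map (fun i => y (n - p) - y i) (seq 0 (n - q)))).
  { rewrite prodl_map_seq_rev. f_equal. apply map_ext_in. intros i Hi. apply in_seq in Hi.
    rewrite !Hrefl by lia. replace (n - (q + (n - q) - i))%nat with i by lia. ring. }
  unfold prodl in Hleft, Hright. unfold Lambda_pqr, dpq.
  rewrite Hleft, Hright, y_next_reflect, y_prev_reflect, Rmin_comm by lia.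
  replace (y' q - y' p) with (y (n - p) - y (n - q)) by (rewrite !Hrefl by lia; ring).
  replace (n - (n - p))%nat with p by lia.
  replace (Z.of_nat p + Z.of_nat r - Z.of_nat q)%Z
    with (Z.of_nat (n - q) + Z.of_nat r - Z.of_nat (n - p))%Z by lia.
  f_equal. ring.
Qed.

Lemma Lambda_r_reflect r f : Lambda_r y' n r f = Lambda_r y n r f.
Proof.
  apply Rle_antisym; apply Lambda_r_le; try apply Lambda_r_ge0; intros p q Hpq.
  - rewrite Lambda_pqr_reflect by lia. apply Lambda_pqr_le_Lambda_r. lia.
  - replace (Lambda_pqr y n p q r f) with (Lambda_pqr y' n (n - q) (n - p) r f).
    + apply Lambda_pqr_le_Lambda_r. lia.
    + rewrite Lambda_pqr_reflect by lia. f_equal; lia.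
Qed.

End Reflection.

Definition nondecr (y : nat -> R) (n : nat) : Prop := forall i, (i < n)%nat -> y i <= y (S i).

Lemma pow2_le a b : (a <= b)%nat -> 2 ^ a <= 2 ^ b.
Proof. intros H. apply Rle_pow; [lra | exact H]. Qed.

Lemma y_next_lt y n q : (q < n)%nat -> y_next y n q = y (S q).
Proof. intros H. unfold y_next. destruct (Nat.eqb_spec q n); [lia | reflexivity]. Qed.

Lemma y_next_last y n : y_next y n n = y n + (y n - y 0%nat).
Proof. unfold y_next. now rewrite Nat.eqb_refl. Qed.

Lemma denom_full y n : denom y n 0 n = 1.
Proof. unfold denom. rewrite Nat.sub_diag. unfold prodl. simpl. ring. Qed.

Lemma denom_drop_last y n p q : (q < n)%nat -> denom y n p q = denom y (n - 1) p q * (y n - y p).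
Proof.
  intros Hq. unfold denom. replace (n - q)%nat with (S (n - 1 - q)) by lia.
  rewrite seq_S, map_app, prodl_app. replace (S q + (n - 1 - q))%nat with n by lia.
  unfold prodl at 3. simpl. ring.
Qed.

Lemma dpq_before_last_ge y n p : (1 <= p < n)%nat -> y n - y p <= y (n - 1)%nat - y (p - 1)%nat ->
  y n - y p <= dpq y n p (n - 1).
Proof.
  intros Hp Hlen. unfold dpq. rewrite y_next_lt by lia. replace (S (n - 1)) with n by lia.
  destruct p as [| p]; [lia |]. simpl in *. rewrite Nat.sub_0_r in Hlen. apply Rmin_glb; lra.
Qed.

Section Nondecreasing.

Variables (y : nat -> R) (n : nat).
Hypothesis Hy : nondecr y n.

Lemma nondecr_le i j : (i <= j <= n)%nat -> y i <= y j.
Proof.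
  intros [Hij Hjn]. induction Hij as [| j Hij IH]; [lra |].
  apply Rle_trans with (y j); [apply IH; lia | apply Hy; lia].
Qed.

Lemma dpq_ge p q : (p <= q <= n)%nat -> y q - y p <= dpq y n p q.
Proof.
  intros Hpq. assert (y 0%nat <= y n) by (apply nondecr_le; lia).
  unfold dpq. apply Rmin_glb.
  - destruct (Nat.eq_dec q n) as [-> | Hq].
    + rewrite y_next_last. lra.
    + rewrite y_next_lt by lia. assert (y q <= y (S q)) by (apply Hy; lia). lra.
  - destruct p as [| p]; simpl; [lra |].
    assert (y p <= y (S p)) by (apply Hy; lia). lra.
Qed.

Lemma dpq_le p q : (p <= q <= n)%nat -> dpq y n p q <= 2 * (y n - y 0%nat).
Proof.
  intros Hpq. assert (y 0%nat <= y p) by (apply nondecr_le; lia).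
  unfold dpq. eapply Rle_trans; [apply Rmin_l |].
  destruct (Nat.eq_dec q n) as [-> | Hq].
  - rewrite y_next_last. lra.
  - rewrite y_next_lt by lia.
    assert (y (S q) <= y n) by (apply nondecr_le; lia).
    assert (y p <= y n) by (apply nondecr_le; lia). lra.
Qed.

Lemma dpq_drop_last p q : (p <= q)%nat -> (S q < n)%nat -> dpq y (n - 1) p q <= dpq y n p q.
Proof.
  intros Hpq Hq. unfold dpq. rewrite !y_next_lt by lia.
  apply Rmin_glb; [apply Rmin_l |]. eapply Rle_trans; [apply Rmin_r |].
  destruct p as [| p]; simpl; [| lra].
  assert (y (n - 1)%nat <= y n) by (apply nondecr_le; lia). lra.
Qed.

Lemma pow_dpq_le_denom p q : (p <= q <= n)%nat -> dpq y n p q ^ (p + (n - q)) <= denom y n p q.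
Proof.
  intros Hpq. unfold denom. rewrite pow_add.
  assert (Hd : 0 <= dpq y n p q).
  { eapply Rle_trans; [| apply dpq_ge; lia]. assert (y p <= y q) by (apply nondecr_le; lia). lra. }
  assert (HA := pow_le_prodl (fun i => y q - y i) (seq 0 p) _ Hd).
  assert (HB := pow_le_prodl (fun i => y i - y p) (seq (S q) (n - q)) _ Hd).
  rewrite length_seq in HA, HB.
  apply Rmult_le_compat; try (apply pow_le; exact Hd); [apply HA | apply HB];
    intros i Hi; apply in_seq in Hi; unfold dpq.
  - eapply Rle_trans; [apply Rmin_r |]. destruct p as [| p]; [lia |]. simpl.
    assert (y i <= y p) by (apply nondecr_le; lia). lra.
  - eapply Rle_trans; [apply Rmin_l |]. rewrite y_next_lt by lia.
    assert (y (S q) <= y i) by (apply nondecr_le; lia). lra.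
Qed.

Lemma denom_extend_right p q : (p <= q < n)%nat ->
  (forall i, (i < p)%nat -> y (S q) - y q <= y q - y i) ->
  denom y n p (S q) * (y (S q) - y p) <= 2 ^ p * denom y n p q.
Proof.
  intros Hpq Hgap. unfold denom.
  replace (n - q)%nat with (S (n - S q)) by lia. change (seq (S q) (S (n - S q)))
    with (S q :: seq (S (S q)) (n - S q)).
  set (A := prodl (map (fun i => y (S q) - y i) (seq 0 p))).
  set (B := prodl (map (fun i => y q - y i) (seq 0 p))).
  set (C := prodl (map (fun i => y i - y p) (seq (S (S q)) (n - S q)))).
  replace (prodl (map (fun i => y i - y p) (S q :: seq (S (S q)) (n - S q))))
    with ((y (S q) - y p) * C) by reflexivity.
  assert (HC : 0 <= C).
  { apply prodl_ge0. intros i Hi. apply in_seq in Hi.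
    assert (y p <= y i) by (apply nondecr_le; lia). lra. }
  assert (HAB : A <= 2 ^ p * B).
  { assert (H := prodl_le_pow2 (fun i => y (S q) - y i) (fun i => y q - y i) (seq 0 p)).
    rewrite length_seq in H. apply H. intros i Hi. apply in_seq in Hi.
    assert (y i <= y q) by (apply nondecr_le; lia).
    assert (y q <= y (S q)) by (apply Hy; lia).
    specialize (Hgap i ltac:(lia)). lra. }
  assert (y p <= y (S q)) by (apply nondecr_le; lia).
  replace (A * C * (y (S q) - y p)) with (A * ((y (S q) - y p) * C)) by ring.
  replace (2 ^ p * (B * ((y (S q) - y p) * C))) with (2 ^ p * B * ((y (S q) - y p) * C)) by ring.
  apply Rmult_le_compat_r; [apply Rmult_le_pos; lra | exact HAB].
Qed.

Lemma denom_extend_left p q : (S p <= q <= n)%nat ->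
  (forall i, (q < i <= n)%nat -> y (S p) - y p <= y i - y (S p)) ->
  denom y n p q * (y q - y p) <= 2 ^ (n - q) * denom y n (S p) q.
Proof.
  intros Hpq Hgap. unfold denom. rewrite seq_S, map_app, prodl_app.
  set (A := prodl (map (fun i => y q - y i) (seq 0 p))).
  set (B := prodl (map (fun i => y i - y p) (seq (S q) (n - q)))).
  set (C := prodl (map (fun i => y i - y (S p)) (seq (S q) (n - q)))).
  replace (prodl (map (fun i => y q - y i) ((0 + p)%nat :: nil))) with (y q - y p)
    by (unfold prodl; simpl; ring).
  assert (HA : 0 <= A).
  { apply prodl_ge0. intros i Hi. apply in_seq in Hi.
    assert (y i <= y q) by (apply nondecr_le; lia). lra. }
  assert (HBC : B <= 2 ^ (n - q) * C).
  { assert (H := prodl_le_pow2 (fun i => y i - y p) (fun i => y i - y (S p)) (seq (S q) (n - q))).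
    rewrite length_seq in H. apply H. intros i Hi. apply in_seq in Hi.
    assert (y p <= y (S p)) by (apply Hy; lia).
    assert (y (S p) <= y i) by (apply nondecr_le; lia).
    specialize (Hgap i ltac:(lia)). lra. }
  assert (y p <= y q) by (apply nondecr_le; lia).
  replace (A * B * (y q - y p)) with (A * (y q - y p) * B) by ring.
  replace (2 ^ (n - q) * (A * (y q - y p) * C)) with (A * (y q - y p) * (2 ^ (n - q) * C)) by ring.
  apply Rmult_le_compat_l; [apply Rmult_le_pos; lra | exact HBC].
Qed.

Lemma dpq_last_ge p : (1 <= p <= n)%nat -> y (n - 1)%nat - y (p - 1)%nat <= dpq y n p n.
Proof.
  intros Hp. unfold dpq. rewrite y_next_last. destruct p as [| p]; [lia |]. simpl.
  rewrite Nat.sub_0_r. assert (y (n - 1)%nat <= y n) by (apply nondecr_le; lia).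
  assert (y 0%nat <= y p) by (apply nondecr_le; lia).
  assert (y p <= y (S p)) by (apply Hy; lia).
  assert (y (S p) <= y n) by (apply nondecr_le; lia). apply Rmin_glb; lra.
Qed.

Lemma denom_last_le p : (p < n)%nat -> y p < y n ->
  (forall i, (i < p)%nat -> y n - y (n - 1)%nat <= y (n - 1)%nat - y i) ->
  denom y n p n <= 2 ^ p * denom y (n - 1) p (n - 1).
Proof.
  intros Hp Hpn Hgap.
  assert (H := denom_extend_right p (n - 1) ltac:(lia)).
  replace (S (n - 1)) with n in H by lia.
  rewrite (denom_drop_last y n p (n - 1)) in H by lia.
  apply (Rmult_le_reg_r (y n - y p)); [lra |]. rewrite Rmult_assoc. now apply H.
Qed.

Lemma denom_ge0 p q : (p <= q <= n)%nat -> 0 <= denom y n p q.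
Proof.
  intros Hpq. unfold denom. apply Rmult_le_pos; apply prodl_ge0; intros i Hi; apply in_seq in Hi.
  - assert (y i <= y q) by (apply nondecr_le; lia). lra.
  - assert (y p <= y i) by (apply nondecr_le; lia). lra.
Qed.

Lemma dpq_attained p q : (p <= q <= n)%nat -> (1 <= p + (n - q))%nat ->
  ((q < n)%nat /\ dpq y n p q = y (S q) - y p /\
     forall i, (i < p)%nat -> y (S q) - y q <= y q - y i) \/
  ((1 <= p)%nat /\ dpq y n p q = y q - y (p - 1)%nat /\
     forall i, (q < i <= n)%nat -> y p - y (p - 1)%nat <= y i - y p).
Proof.
  intros Hpq HE. assert (H0n : y 0%nat <= y n) by (apply nondecr_le; lia).
  unfold dpq. destruct (Nat.eq_dec q n) as [-> | Hq].
  - right. destruct p as [| p]; [lia |]. simpl. rewrite Nat.sub_0_r, y_next_last.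
    repeat split; [lia | | intros; lia]. apply Rmin_right.
    assert (y p <= y (S p)) by (apply Hy; lia).
    assert (y 0%nat <= y p) by (apply nondecr_le; lia).
    assert (y (S p) <= y n) by (apply nondecr_le; lia). lra.
  - rewrite y_next_lt by lia. assert (y q <= y (S q)) by (apply Hy; lia).
    destruct p as [| p].
    + left. repeat split; [lia | | intros; lia]. simpl. apply Rmin_left.
      assert (y (S q) <= y n) by (apply nondecr_le; lia).
      assert (y 0%nat <= y q) by (apply nondecr_le; lia). lra.
    + simpl. rewrite Nat.sub_0_r.
      assert (y p <= y (S p)) by (apply Hy; lia).
      assert (y (S p) <= y q) by (apply nondecr_le; lia).
      destruct (Rle_dec (y (S q) - y (S p)) (y q - y p)) as [Hr | Hl].
      * left. repeat split; [lia | now apply Rmin_left |].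
        intros i Hi. assert (y i <= y p) by (apply nondecr_le; lia). lra.
      * right. repeat split; [lia | apply Rmin_right; lra |].
        intros i Hi. assert (y (S q) <= y i) by (apply nondecr_le; lia). lra.
Qed.

Lemma pair_extend p q : (p <= q <= n)%nat -> (1 <= p + (n - q))%nat ->
  exists p' q', (p' <= p)%nat /\ (q <= q' <= n)%nat /\ (p' + (n - q') = p + (n - q) - 1)%nat /\
    y q' - y p' = dpq y n p q /\
    denom y n p' q' * dpq y n p q <= 2 ^ (p + (n - q)) * denom y n p q.
Proof.
  intros Hpq HE.
  destruct (dpq_attained p q Hpq HE) as [(Hq & Hd & Hgap) | (Hp & Hd & Hgap)]; rewrite Hd.
  - exists p, (S q). repeat split; try lia.
    eapply Rle_trans; [apply denom_extend_right; auto; lia |].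
    apply Rmult_le_compat_r; [apply denom_ge0; lia | apply pow2_le; lia].
  - exists (p - 1)%nat, q. repeat split; try lia.
    replace (denom y n p q) with (denom y n (S (p - 1)) q) by (f_equal; lia).
    eapply Rle_trans; [apply denom_extend_left; [lia |] |].
    + replace (S (p - 1)) with p by lia. exact Hgap.
    + apply Rmult_le_compat_r; [apply denom_ge0; lia | apply pow2_le; lia].
Qed.

End Nondecreasing.

Lemma inv_pow_le_mul v t n : 0 < v <= t -> / v ^ n <= t * / v ^ (n + 1).
Proof.
  intros Hv. rewrite pow_add, pow_1, Rinv_mult.
  assert (0 < / v ^ n) by (apply Rinv_0_lt_compat, pow_lt; lra).
  assert (1 <= t * / v) by (apply (Rmult_le_reg_r v); [lra |]; field_simplify; lra).
  nra.
Qed.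

Lemma inv_pow_add_le v t n E : 0 < t <= v -> / v ^ (n + E) <= / t ^ E * / v ^ n.
Proof.
  intros Htv. rewrite pow_add, Rinv_mult, Rmult_comm.
  apply Rmult_le_compat_r; [left; apply Rinv_0_lt_compat, pow_lt; lra |].
  apply Rinv_le_contravar; [apply pow_lt; lra | apply pow_incr; lra].
Qed.

Fixpoint tail_const (E : nat) : R :=
  match E with
  | O => 2
  | S E' => 1 + 2 ^ S E' * tail_const E'
  end.

Lemma tail_const_ge1 E : 1 <= tail_const E.
Proof.
  destruct E as [| E]; simpl; [lra |].
  induction E as [| E IH]; simpl in *; [lra |].
  assert (0 < 2 * 2 ^ E) by (apply Rmult_lt_0_compat; [lra | apply pow_lt; lra]). nra.
Qed.

Lemma tail_const_le E E' : (E <= E')%nat -> tail_const E <= tail_const E'.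
Proof.
  induction 1 as [| E' _ IH]; [lra |]. eapply Rle_trans; [exact IH |]. simpl.
  assert (1 <= 2 ^ E') by (apply pow_R1_Rle; lra).
  assert (1 <= tail_const E') by apply tail_const_ge1. nra.
Qed.

Definition low_const (k : nat) : R := (1 + 2 ^ k) * (1 + tail_const k).

Definition drop_const (k : nat) : R := 2 ^ k + low_const k.

Lemma low_const_ge E k : (E <= k)%nat ->
  1 + tail_const E <= low_const k /\ 1 + 2 ^ E * (1 + tail_const E) <= low_const k.
Proof.
  intros HE. unfold low_const.
  assert (H2 : 2 ^ E <= 2 ^ k) by (apply pow2_le; exact HE).
  assert (HK : tail_const E <= tail_const k) by (apply tail_const_le; exact HE).
  assert (1 <= 2 ^ E) by (apply pow_R1_Rle; lra).
  assert (1 <= tail_const E) by apply tail_const_ge1. nra.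
Qed.

Section Tuple.

Variables (x : nat -> R) (m r k : nat) (om : R -> R) (L : R).
Hypotheses (Hmk : m = (r + k)%nat) (Hk : (2 <= k)%nat) (Hx : nondecr x m).
Hypothesis Hgap : forall j, (j + r + 1 <= m)%nat -> x j < x (j + r + 1)%nat.
Hypotheses (Hom : inPhi om) (HL : x m - x 0%nat = L).

Lemma x_lt i j : (i + r + 1 <= j <= m)%nat -> x i < x j.
Proof.
  intros Hij. apply Rlt_le_trans with (x (i + r + 1)%nat); [apply Hgap; lia |].
  apply (nondecr_le x m Hx); lia.
Qed.

Lemma L_pos : 0 < L.
Proof. assert (x 0%nat < x m) by (apply x_lt; lia). lra. Qed.

Lemma denom_pos p q : (p + r + 1 <= q <= m)%nat -> 0 < denom x m p q.
Proof.
  intros Hpq. eapply Rlt_le_trans; [| apply (pow_dpq_le_denom x m Hx); lia].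
  apply pow_lt. eapply Rlt_le_trans; [| apply (dpq_ge x m Hx); lia].
  assert (x p < x q) by (apply x_lt; lia). lra.
Qed.

Lemma wint_pair_le p q t : (p + r + 1 <= q <= m)%nat -> x q - x p <= t <= dpq x m p q ->
  wint (q - p - r + 1) om (x q - x p) t <= denom x m p q * Lambda_r x m r om.
Proof.
  intros Hpq Ht. assert (Ha : 0 < x q - x p) by (assert (x p < x q) by (apply x_lt; lia); lra).
  assert (HD := denom_pos p q Hpq).
  apply Rle_trans with (wint (q - p - r + 1) om (x q - x p) (dpq x m p q));
    [apply wint_le_sub; auto; lra |].
  assert (HL' := Lambda_pqr_le_Lambda_r x m r om p q ltac:(lia)).
  rewrite Lambda_pqr_wint in HL' by (try lia; lra).
  apply Rle_div_l in HL'; [lra | exact HD].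
Qed.

Lemma dpq_full : dpq x m 0 m = 2 * L.
Proof. unfold dpq. rewrite y_next_last. simpl. rewrite Rmin_left; lra. Qed.

Lemma wint_top_le : wint (k + 1) om L (2 * L) <= Lambda_r x m r om.
Proof.
  assert (H := wint_pair_le 0 m (2 * L) ltac:(lia)).
  rewrite dpq_full, denom_full, HL in H. replace (m - 0 - r + 1)%nat with (k + 1)%nat in H by lia.
  assert (HLp := L_pos). lra.
Qed.

Lemma wint_tail_top_le t : L <= t <= 2 * L -> wint k om t (2 * L) <= 2 * t * Lambda_r x m r om.
Proof.
  intros Ht. assert (HLp := L_pos).
  apply Rle_trans with (2 * L * wint (k + 1) om t (2 * L)).
  - apply wint_le_weight; auto; try lra. intros v Hv. apply inv_pow_le_mul. lra.
  - assert (wint (k + 1) om t (2 * L) <= Lambda_r x m r om).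
    { eapply Rle_trans; [| apply wint_top_le]. apply wint_le_sub; auto; lra. }
    assert (0 <= wint (k + 1) om t (2 * L)) by (apply wint_ge0; auto; lra). nra.
Qed.

Lemma pow_wint_near_le p q t : (p + r + 1 <= q <= m)%nat -> (1 <= p + (m - q))%nat ->
  x q - x p <= t <= dpq x m p q ->
  t ^ (p + (m - q) - 1) * wint k om t (dpq x m p q) <= denom x m p q * Lambda_r x m r om.
Proof.
  intros Hpq HE Ht. set (E := (p + (m - q) - 1)%nat).
  assert (Ha : 0 < x q - x p) by (assert (x p < x q) by (apply x_lt; lia); lra).
  assert (Hte : 0 < t ^ E) by (apply pow_lt; lra).
  apply Rle_trans with (t ^ E * (/ t ^ E * wint (q - p - r + 1) om t (dpq x m p q))).
  - apply Rmult_le_compat_l; [lra |]. apply wint_le_weight; auto; try lra.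
    intros v Hv. replace k with (q - p - r + 1 + E)%nat by (unfold E; lia).
    apply inv_pow_add_le. lra.
  - rewrite <- Rmult_assoc, Rinv_r, Rmult_1_l by lra.
    apply Rle_trans with (wint (q - p - r + 1) om (x q - x p) (dpq x m p q));
      [apply wint_le_sub; auto; lra |].
    apply wint_pair_le; [lia | split; [lra | apply Rle_refl]].
Qed.

(* Split the tail integral at d(p,q), the length of the pair with exponent E - 1 given by
   pair_extend. *)
Lemma tail_pair_bound E : forall p q t, E = (p + (m - q))%nat -> (p + r + 1 <= q <= m)%nat ->
  x q - x p <= t <= dpq x m p q ->
  t ^ E * wint k om t (2 * L) <= tail_const E * t * denom x m p q * Lambda_r x m r om.
Proof.
  assert (HLp := L_pos). assert (HLam := Lambda_r_ge0 x m r om).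
  induction E as [| E IH]; intros p q t HE Hpq Ht.
  - assert (p = 0%nat /\ q = m) as [-> ->] by lia.
    rewrite dpq_full, HL in Ht. rewrite denom_full, pow_O, Rmult_1_l, Rmult_1_r.
    now apply wint_tail_top_le.
  - destruct (pair_extend x m Hx p q ltac:(lia) ltac:(lia)) as (p' & q' & Hp' & Hq' & HE' & Hlen & Hden).
    assert (Hnear := pow_wint_near_le p q t Hpq ltac:(lia) Ht).
    replace (p + (m - q) - 1)%nat with E in Hnear by lia.
    set (d := dpq x m p q) in *.
    assert (Ha : 0 < x q - x p) by (assert (x p < x q) by (apply x_lt; lia); lra).
    assert (Hd2 : d <= 2 * L) by (rewrite <- HL; apply (dpq_le x m Hx); lia).
    assert (HD := denom_pos p q Hpq).
    assert (HD' := denom_pos p' q' ltac:(lia)).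
    rewrite <- (wint_Chasles om Hom k t d (2 * L)) by lra.
    assert (Hfar : t ^ E * wint k om d (2 * L) <= tail_const E * 2 ^ S E * denom x m p q * Lambda_r x m r om).
    { assert (HF0 : 0 <= wint k om d (2 * L)) by (apply wint_ge0; auto; lra).
      apply Rle_trans with (d ^ E * wint k om d (2 * L)).
      { apply Rmult_le_compat_r; [exact HF0 | apply pow_incr; lra]. }
      eapply Rle_trans; [apply (IH p' q' d); try lia; rewrite <- Hlen; split; [lra | apply (dpq_ge x m Hx); lia] |].
      assert (0 < tail_const E) by (assert (H1 := tail_const_ge1 E); lra).
      replace (tail_const E * d * denom x m p' q' * Lambda_r x m r om)
        with (tail_const E * Lambda_r x m r om * (denom x m p' q' * d)) by ring.
      replace (tail_const E * 2 ^ S E * denom x m p q * Lambda_r x m r om)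
        with (tail_const E * Lambda_r x m r om * (2 ^ S E * denom x m p q)) by ring.
      rewrite <- HE in Hden. apply Rmult_le_compat_l; [nra | exact Hden]. }
    simpl tail_const. change (t ^ S E) with (t * t ^ E).
    replace (t * t ^ E * (wint k om t d + wint k om d (2 * L)))
      with (t * (t ^ E * wint k om t d) + t * (t ^ E * wint k om d (2 * L))) by ring.
    assert (t * (t ^ E * wint k om t d) <= t * (denom x m p q * Lambda_r x m r om))
      by (apply Rmult_le_compat_l; lra).
    assert (t * (t ^ E * wint k om d (2 * L))
            <= t * (tail_const E * 2 ^ S E * denom x m p q * Lambda_r x m r om))
      by (apply Rmult_le_compat_l; lra).
    simpl pow in *. nra.
Qed.

Lemma low_terms_same_pair p q t : (p + r + 1 <= q)%nat -> (q < m)%nat ->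
  x q - x p <= t <= dpq x m p q ->
  wint (q - p - r + 1) om (x q - x p) t + t ^ (p + (m - 1 - q)) * wint k om t (2 * L)
  <= (1 + tail_const (p + (m - q))) * L * denom x (m - 1) p q * Lambda_r x m r om.
Proof.
  intros Hpq Hq Ht.
  assert (HLam := Lambda_r_ge0 x m r om).
  assert (Ha : 0 < x q - x p) by (assert (x p < x q) by (apply x_lt; lia); lra).
  assert (Hxp : 0 < x m - x p <= L).
  { assert (x p < x m) by (apply x_lt; lia).
    assert (x 0%nat <= x p) by (apply (nondecr_le x m Hx); lia). lra. }
  assert (HDx := denom_pos p q ltac:(lia)).
  assert (HDx_eq := denom_drop_last x m p q Hq).
  assert (HDy : 0 < denom x (m - 1) p q) by (rewrite HDx_eq in HDx; nra).
  set (K := tail_const (p + (m - q))).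
  assert (HK : 1 <= K) by apply tail_const_ge1.
  assert (Hpair := wint_pair_le p q t ltac:(lia) Ht).
  assert (Htail : t ^ (p + (m - 1 - q)) * wint k om t (2 * L) <= K * (denom x m p q * Lambda_r x m r om)).
  { assert (H := tail_pair_bound (p + (m - q)) p q t eq_refl ltac:(lia) Ht).
    replace (p + (m - q))%nat with (S (p + (m - 1 - q))) in H at 1 by lia.
    simpl pow in H. apply (Rmult_le_reg_l t); [lra |]. fold K in H. lra. }
  assert (HDL : denom x m p q * Lambda_r x m r om <= L * denom x (m - 1) p q * Lambda_r x m r om).
  { rewrite HDx_eq. replace (denom x (m - 1) p q * (x m - x p) * Lambda_r x m r om)
      with ((x m - x p) * (denom x (m - 1) p q * Lambda_r x m r om)) by ring.
    rewrite Rmult_assoc. apply Rmult_le_compat_r; [apply Rmult_le_pos |]; lra. }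
  assert (K * (denom x m p q * Lambda_r x m r om) <= K * (L * denom x (m - 1) p q * Lambda_r x m r om))
    by (apply Rmult_le_compat_l; lra).
  lra.
Qed.

Lemma low_terms_next_pair p t : (1 <= p)%nat -> (p + r + 2 <= m)%nat ->
  x m - x p <= t <= x (m - 1)%nat - x (p - 1)%nat -> t <= L ->
  wint (m - 1 - p - r + 1) om (x (m - 1)%nat - x p) t + t ^ p * wint k om t (2 * L)
  <= (1 + 2 ^ p * (1 + tail_const p)) * L * denom x (m - 1) p (m - 1) * Lambda_r x m r om.
Proof.
  intros Hp Hpm Ht HtL.
  assert (HLam := Lambda_r_ge0 x m r om).
  assert (Hxp : x p < x m) by (apply x_lt; lia).
  assert (Hxpm : x p < x (m - 1)%nat) by (apply x_lt; lia).
  assert (Hxm : x (m - 1)%nat <= x m) by (apply (nondecr_le x m Hx); lia).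
  set (Dy := denom x (m - 1) p (m - 1)).
  assert (HD1 : denom x m p (m - 1) = Dy * (x m - x p)) by (apply denom_drop_last; lia).
  assert (HDy : 0 < Dy) by (assert (H := denom_pos p (m - 1) ltac:(lia)); rewrite HD1 in H; nra).
  assert (HDm : denom x m p m <= 2 ^ p * Dy).
  { apply (denom_last_le x m Hx); [lia | lra |].
    intros i Hi. assert (x i <= x (p - 1)%nat) by (apply (nondecr_le x m Hx); lia). lra. }
  assert (Hd1 : x m - x p <= dpq x m p (m - 1)) by (apply dpq_before_last_ge; lia || lra).
  assert (Hd2 : x (m - 1)%nat - x (p - 1)%nat <= dpq x m p m) by (apply (dpq_last_ge x m Hx); lia).
  assert (HP : 0 <= Dy * Lambda_r x m r om) by (apply Rmult_le_pos; lra).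
  assert (HDmL : denom x m p m * Lambda_r x m r om <= 2 ^ p * (Dy * Lambda_r x m r om)).
  { rewrite <- Rmult_assoc. apply Rmult_le_compat_r; lra. }
  rewrite <- (wint_Chasles om Hom _ (x (m - 1)%nat - x p) (x m - x p) t) by lra.
  assert (HW1 : wint (m - 1 - p - r + 1) om (x (m - 1)%nat - x p) (x m - x p)
                <= L * (Dy * Lambda_r x m r om)).
  { eapply Rle_trans; [apply wint_pair_le; lia || lra |].
    rewrite HD1. replace (Dy * (x m - x p) * Lambda_r x m r om)
      with ((x m - x p) * (Dy * Lambda_r x m r om)) by ring.
    apply Rmult_le_compat_r; lra. }
  assert (HW2 : wint (m - 1 - p - r + 1) om (x m - x p) t <= L * (2 ^ p * (Dy * Lambda_r x m r om))).
  { apply Rle_trans with (t * wint (m - p - r + 1) om (x m - x p) t).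
    - apply wint_le_weight; auto; try lra. intros v Hv.
      replace (m - p - r + 1)%nat with (m - 1 - p - r + 1 + 1)%nat by lia.
      apply inv_pow_le_mul. lra.
    - assert (H := wint_pair_le p m t ltac:(lia) ltac:(lra)).
      assert (0 <= wint (m - p - r + 1) om (x m - x p) t) by (apply wint_ge0; auto; lra).
      apply Rmult_le_compat; lra. }
  assert (HT : t ^ p * wint k om t (2 * L) <= tail_const p * L * (2 ^ p * (Dy * Lambda_r x m r om))).
  { assert (H := tail_pair_bound p p m t ltac:(lia) ltac:(lia) ltac:(lra)).
    assert (HK : 1 <= tail_const p) by apply tail_const_ge1.
    assert (0 <= denom x m p m * Lambda_r x m r om)
      by (apply Rmult_le_pos; [left; apply denom_pos; lia | lra]).
    eapply Rle_trans; [exact H |]. rewrite !Rmult_assoc. apply Rmult_le_compat_l; [lra |].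
    apply Rmult_le_compat; lra. }
  assert (HE : 0 <= 2 ^ p) by (apply pow_le; lra).
  replace ((1 + 2 ^ p * (1 + tail_const p)) * L * Dy * Lambda_r x m r om)
    with (L * (Dy * Lambda_r x m r om) + L * (2 ^ p * (Dy * Lambda_r x m r om))
          + tail_const p * L * (2 ^ p * (Dy * Lambda_r x m r om))) by ring.
  lra.
Qed.

Variable phi : R -> R.
Hypothesis Hphi : inPhi phi.
Hypothesis phi_small : forall t, 0 < t <= L -> phi t <= t ^ (k - 1) * wint k om t (2 * L).
Hypothesis phi_large : forall t, L <= t <= 2 * L -> phi t <= om t.

Lemma low_bound_first_last : x (m - 1)%nat - x 0%nat < L ->
  wint k phi (x (m - 1)%nat - x 0%nat) (Rmin (dpq x (m - 1) 0 (m - 1)) L)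
  <= low_const k * L * Lambda_r x m r om.
Proof.
  intros HaL. set (a := x (m - 1)%nat - x 0%nat) in *.
  assert (HLp := L_pos). assert (HLam := Lambda_r_ge0 x m r om).
  assert (Ha : 0 < a) by (assert (x 0%nat < x (m - 1)%nat) by (apply x_lt; lia); unfold a; lra).
  assert (Hab := dpq_ge x (m - 1) (fun i Hi => Hx i ltac:(lia)) 0 (m - 1) ltac:(lia)).
  assert (Hb2a : dpq x (m - 1) 0 (m - 1) <= 2 * a).
  { unfold dpq. eapply Rle_trans; [apply Rmin_l | rewrite y_next_last; unfold a; lra]. }
  fold a in Hab.
  assert (Hb := Rmin_l (dpq x (m - 1) 0 (m - 1)) L).
  assert (HbL := Rmin_r (dpq x (m - 1) 0 (m - 1)) L).
  assert (Hab' : a <= Rmin (dpq x (m - 1) 0 (m - 1)) L) by (apply Rmin_glb; lra).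
  eapply Rle_trans; [apply (wint_phi_low0 phi om k L Hphi Hom HLp phi_small); lia || lra |].
  assert (H := tail_pair_bound 1 0 (m - 1) a ltac:(lia) ltac:(lia)
                 ltac:(split; [apply Rle_refl | apply (dpq_ge x m Hx); lia])).
  rewrite denom_drop_last, denom_full, HL, pow_1 in H by lia.
  destruct (low_const_ge 1 k ltac:(lia)) as [HK _].
  apply (Rmult_le_reg_l a); [lra |]. eapply Rle_trans; [exact H |].
  replace (tail_const 1 * a * (1 * L) * Lambda_r x m r om)
    with (a * (tail_const 1 * (L * Lambda_r x m r om))) by ring.
  replace (a * (low_const k * L * Lambda_r x m r om))
    with (a * (low_const k * (L * Lambda_r x m r om))) by ring.
  apply Rmult_le_compat_l; [lra |].
  apply Rmult_le_compat_r; [apply Rmult_le_pos |]; lra.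
Qed.

Lemma low_bound_drop_last p q : (p + r + 1 <= q <= m - 1)%nat -> x q - x p < L ->
  wint (q - p - r + 1) phi (x q - x p) (Rmin (dpq x (m - 1) p q) L)
  <= low_const k * L * denom x (m - 1) p q * Lambda_r x m r om.
Proof.
  intros Hpq HaL.
  destruct (Nat.eq_dec (p + (m - 1 - q)) 0) as [He0 | He].
  { assert (p = 0%nat /\ q = (m - 1)%nat) as [-> ->] by lia.
    replace (m - 1 - 0 - r + 1)%nat with k by lia. rewrite denom_full, Rmult_1_r.
    now apply low_bound_first_last. }
  assert (Hx' : nondecr x (m - 1)) by (intros i Hi; apply Hx; lia).
  assert (HLp := L_pos). assert (HLam := Lambda_r_ge0 x m r om).
  assert (Ha : 0 < x q - x p) by (assert (x p < x q) by (apply x_lt; lia); lra).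
  assert (Hab := dpq_ge x (m - 1) Hx' p q ltac:(lia)).
  assert (HDe := pow_dpq_le_denom x (m - 1) Hx' p q ltac:(lia)).
  set (b := dpq x (m - 1) p q) in *.
  assert (Hb' : x q - x p <= Rmin b L <= L) by (split; [apply Rmin_glb | apply Rmin_r]; lra).
  assert (Hbb := Rmin_l b L).
  assert (HP : 0 <= L * denom x (m - 1) p q * Lambda_r x m r om).
  { assert (0 < b ^ (p + (m - 1 - q))) by (apply pow_lt; lra).
    apply Rmult_le_pos; [apply Rmult_le_pos |]; lra. }
  eapply Rle_trans; [apply (wint_phi_low phi om k L Hphi Hom HLp phi_small (q - p - r) (p + (m - 1 - q)));
                     lia || lra |].
  destruct (Rle_dec (Rmin b L) (dpq x m p q)) as [Hnear | Hfar].
  - eapply Rle_trans; [apply low_terms_same_pair; lia || lra |].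
    destruct (low_const_ge (p + (m - q)) k ltac:(lia)) as [HK _].
    rewrite !Rmult_assoc. apply Rmult_le_compat_r; [rewrite <- Rmult_assoc; exact HP | exact HK].
  - (* Only the pair (p, m - 1) with p >= 1 can lose length when x_m is dropped. *)
    destruct (Nat.eq_dec q (m - 1)) as [-> | Hq].
    2: { exfalso. assert (b <= dpq x m p q) by (apply (dpq_drop_last x m Hx); lia). lra. }
    destruct p as [| p]; [lia |].
    assert (Hprev : b <= x (m - 1)%nat - x p).
    { unfold b, dpq. eapply Rle_trans; [apply Rmin_r | simpl; lra]. }
    assert (Hnext : x m - x (S p) <= Rmin b L).
    { destruct (Rle_dec (x m - x (S p)) (Rmin b L)) as [H | H]; [exact H | exfalso].
      apply Hfar. unfold dpq. rewrite y_next_lt by lia. replace (S (m - 1)) with m by lia.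
      apply Rmin_glb; simpl; lra. }
    replace (S p + (m - 1 - (m - 1)))%nat with (S p) by lia.
    eapply Rle_trans; [apply low_terms_next_pair; simpl; rewrite ?Nat.sub_0_r; lia || lra |].
    destruct (low_const_ge (S p) k ltac:(lia)) as [_ HK].
    rewrite !Rmult_assoc. apply Rmult_le_compat_r; [rewrite <- Rmult_assoc; exact HP | exact HK].
Qed.

Lemma Lambda_pqr_drop_last p q : (p <= m - 1 /\ q <= m - 1 /\ p + r + 1 <= q)%nat ->
  Lambda_pqr x (m - 1) p q r phi <= drop_const k * L * Lambda_r x m r om.
Proof.
  intros Hpq.
  assert (Hx' : nondecr x (m - 1)) by (intros i Hi; apply Hx; lia).
  assert (HLp := L_pos). assert (HLam := Lambda_r_ge0 x m r om).
  assert (Ha : 0 < x q - x p) by (assert (x p < x q) by (apply x_lt; lia); lra).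
  assert (Hab := dpq_ge x (m - 1) Hx' p q ltac:(lia)).
  assert (Hb2 : dpq x (m - 1) p q <= 2 * L).
  { eapply Rle_trans; [apply (dpq_le x (m - 1) Hx'); lia |].
    assert (x (m - 1)%nat <= x m) by (apply (nondecr_le x m Hx); lia). lra. }
  assert (HDe := pow_dpq_le_denom x (m - 1) Hx' p q ltac:(lia)).
  set (D := denom x (m - 1) p q) in *.
  assert (HD : 0 < D) by (eapply Rlt_le_trans; [apply pow_lt |]; [| exact HDe]; lra).
  rewrite Lambda_pqr_wint by (lia || lra). fold D. apply Rle_div_l; [exact HD |].
  eapply Rle_trans.
  - apply (wint_phi_le phi om k L Hphi Hom HLp phi_large (q - p - r) (p + (m - 1 - q))
             _ _ D (Lambda_r x m r om) (low_const k * L * D * Lambda_r x m r om));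
      try (lia || lra).
    + apply wint_top_le.
    + destruct (low_const_ge 0 k ltac:(lia)) as [H _]. simpl in H.
      apply Rmult_le_pos; [apply Rmult_le_pos; [apply Rmult_le_pos |] |]; lra.
    + intros HaL. apply low_bound_drop_last; lia || lra.
  - assert (H2 : 2 ^ (p + (m - 1 - q) + 1) <= 2 ^ k) by (apply pow2_le; lia).
    unfold drop_const.
    assert (0 <= L * D * Lambda_r x m r om) by (apply Rmult_le_pos; [apply Rmult_le_pos |]; lra).
    replace ((2 ^ k + low_const k) * L * Lambda_r x m r om * D)
      with (2 ^ k * (L * D * Lambda_r x m r om) + low_const k * L * D * Lambda_r x m r om) by ring.
    replace (2 ^ (p + (m - 1 - q) + 1) * L * D * Lambda_r x m r om)
      with (2 ^ (p + (m - 1 - q) + 1) * (L * D * Lambda_r x m r om)) by ring.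
    apply Rplus_le_compat_r. apply Rmult_le_compat_r; lra.
Qed.

Lemma Lambda_r_drop_last : Lambda_r x (m - 1) r phi <= drop_const k * L * Lambda_r x m r om.
Proof.
  apply Lambda_r_le; [| exact Lambda_pqr_drop_last].
  assert (HLp := L_pos). assert (HLam := Lambda_r_ge0 x m r om).
  destruct (low_const_ge 0 k ltac:(lia)) as [H _]. simpl in H.
  assert (0 < 2 ^ k) by (apply pow_lt; lra). unfold drop_const.
  apply Rmult_le_pos; [apply Rmult_le_pos |]; lra.
Qed.

End Tuple.

Theorem lemma3p3 :
  forall k : nat, (2 <= k)%nat ->
  exists c : R,
  forall (r m : nat) (x : nat -> R) (phi omega : R -> R),
    m = (r + k)%nat ->
    (forall i, (i < m)%nat -> x i <= x (S i)) ->
    (forall j, (j + r + 1 <= m)%nat -> x j < x (j + r + 1)%nat) ->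
    inPhi phi -> inPhi omega ->
    (forall t, 0 < t <= (2 * (x m - x 0%nat)) / 2 ->
       phi t <= t ^ (k - 1) *
                RInt (fun u => / u ^ k * omega u) t (2 * (x m - x 0%nat))) ->
    (forall t, (2 * (x m - x 0%nat)) / 2 <= t <= 2 * (x m - x 0%nat) ->
       phi t <= omega t) ->
    Lambda_r x (m - 1) r phi <= c * (x m - x 0%nat) * Lambda_r x m r omega /\
    Lambda_r (fun i => x (S i)) (m - 1) r phi
      <= c * (x m - x 0%nat) * Lambda_r x m r omega.
Proof.
  intros k Hk. exists (drop_const k).
  intros r m x phi om Hmk Hx Hgap Hphi Hom Hsmall Hlarge.
  set (L := x m - x 0%nat) in *.
  assert (Hsmall' : forall t, 0 < t <= L -> phi t <= t ^ (k - 1) * wint k om t (2 * L))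
    by (intros t Ht; apply Hsmall; lra).
  assert (Hlarge' : forall t, L <= t <= 2 * L -> phi t <= om t)
    by (intros t Ht; apply Hlarge; lra).
  split; [apply (Lambda_r_drop_last x m r k om L); auto |].
  (* The reflection i |-> -x(m-i) turns (x_1, ..., x_m) into (z_0, ..., z_(m-1)). *)
  set (z := fun i => - x (m - i)%nat).
  rewrite <- (Lambda_r_reflect (fun i => x (S i)) z (m - 1)).
  2: { intros i Hi. unfold z. replace (m - i)%nat with (S (m - 1 - i)) by lia. reflexivity. }
  rewrite <- (Lambda_r_reflect x z m) by reflexivity.
  apply (Lambda_r_drop_last z m r k om L); auto.
  - intros i Hi. unfold z. apply Ropp_le_contravar.
    replace (m - i)%nat with (S (m - S i)) by lia. apply Hx. lia.
  - intros j Hj. unfold z. apply Ropp_lt_contravar.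
    replace (m - j)%nat with (m - (j + r + 1) + r + 1)%nat by lia. apply Hgap. lia.
  - unfold z, L. rewrite Nat.sub_diag, Nat.sub_0_r. ring.
Qed.
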